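(* For every real number $\kappa\ge 0$ there exists a contraction $T$ on a Hilbert space such that $\sqrt{1-TT^*}$ has finite rank and $K(T) = \kappa$. In particular, there exist (non-pure) contractions with finite-rank defect $\sqrt{1-TT^*}$ whose curvature is not an integer.
   Context: A contraction $T$ on $H$ is pure if ${T^*}^n h \to 0$ for every $h\in H$. For a contraction $T$ with $\Delta_T := \sqrt{1-TT^*}$ of finite rank, the curvature of $T$ is $$K(T) := \int_{|z|=1} \lim_{r\uparrow 1} (1-r^2)\, \operatorname{tr}\big(\Delta_T (1-rzT^* )^{-1}(1-r\bar z T)^{-1}\Delta_T\big)\, dz,$$ where $dz$ denotes normalized arc-length (Haar probability) measure on the unit circle. *)

From HB Require Import structures.
From mathcomp Require Import all_boot all_order all_algebra.
From mathcomp Require Import all_classical all_reals all_analysis.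
From mathcomp Require Import complex.
Set Implicit Arguments. Unset Strict Implicit. Unset Printing Implicit Defensive.
Import Order.TTheory GRing.Theory Num.Theory.
Import numFieldNormedType.Exports.
Local Open Scope classical_set_scope.
Local Open Scope ring_scope.

Section Hilbert.
Variables (R : realType) (V : lmodType R[i]) (ip : V -> V -> R[i]).

Definition is_inner_product : Prop :=
  [/\ (forall (a : R[i]) (x y z : V), ip (a *: x + y) z = a * ip x z + ip y z),
      (forall x y : V, ip y x = conjc (ip x y)),
      (forall x : V, 0 <= ip x x) &
      (forall x : V, ip x x = 0 -> x = 0)].

Definition ipnorm (x : V) : R := Num.sqrt (complex.Re (ip x x)).

Definition ip_complete : Prop :=
  forall u : nat -> V,
    (forall eps : R, 0 < eps -> exists N : nat, forall m k : nat,
        (N <= m)%N -> (N <= k)%N -> ipnorm (u m - u k) < eps) ->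
    exists v : V, forall eps : R, 0 < eps -> exists N : nat, forall m : nat,
        (N <= m)%N -> ipnorm (u m - v) < eps.

Definition is_hilbert : Prop := is_inner_product /\ ip_complete.

Definition is_linear_op (T : V -> V) : Prop :=
  forall (a : R[i]) (x y : V), T (a *: x + y) = a *: T x + T y.

Definition is_bounded_op (T : V -> V) : Prop :=
  is_linear_op T /\ exists M : R, forall x, ipnorm (T x) <= M * ipnorm x.

Definition is_contraction_op (T : V -> V) : Prop :=
  is_linear_op T /\ forall x, ipnorm (T x) <= ipnorm x.

Definition is_adjoint (T S : V -> V) : Prop :=
  forall x y : V, ip (T x) y = ip x (S y).

Definition is_defect_op (T Ts D : V -> V) : Prop :=
  [/\ is_bounded_op D, is_adjoint D D,
      (forall x, 0 <= ip (D x) x) &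
      (forall x, D (D x) = x - T (Ts x))].

Definition finite_rank (D : V -> V) : Prop :=
  exists (n : nat) (f : 'I_n -> V),
    forall x, exists c : 'I_n -> R[i], D x = \sum_(i < n) c i *: f i.

Definition is_onb_range (D : V -> V) (n : nat) (e : 'I_n -> V) : Prop :=
  [/\ (forall i j : 'I_n, ip (e i) (e j) = (i == j)%:R),
      (forall i, exists x, e i = D x) &
      (forall x, exists c : 'I_n -> R[i], D x = \sum_(i < n) c i *: e i)].

(* trace of a finite-rank operator F with range inside span(e), e orthonormal:
   tr F = sum_i <F e_i, e_i> *)
Definition trace_on (n : nat) (e : 'I_n -> V) (F : V -> V) : R[i] :=
  \sum_(i < n) ip (F (e i)) (e i).

Definition inv_op (A : V -> V) (v : V) : V := xget 0 [set w | A w = v].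

Definition circ (theta : R) : R[i] := (cos theta +i* sin theta)%C.

(* (1 - r^2) tr( D (1 - r z Ts)^{-1} (1 - r zbar T)^{-1} D ) at z = e^{i theta};
   this trace is a (nonnegative) real number, we take its real part. *)
Definition curv_integrand (T Ts D : V -> V) (n : nat) (e : 'I_n -> V)
    (theta r : R) : R :=
  let z := circ theta in
  let c := (r%:C * z)%C in
  (1 - r ^+ 2) * complex.Re (trace_on e
     (fun v => D (inv_op (fun w => w - c *: Ts w)
                   (inv_op (fun w => w - conjc c *: T w) (D v))))).

Definition curv_boundary (T Ts D : V -> V) (n : nat) (e : 'I_n -> V)
    (theta : R) : R :=
  lim (curv_integrand T Ts D e theta @ (1 : R)^'-).

(* K(T) = \int_{|z|=1} ... dz with dz normalized arc length:
   (1/(2 pi)) \int_0^{2 pi} ... d theta, as an extended real *)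
Definition curvature (T Ts D : V -> V) (n : nat) (e : 'I_n -> V) : \bar R :=
  ((2 * pi)^-1)%:E *
  (\int[@lebesgue_measure R]_(t in `[0%R, (2 * pi)%R]) (curv_boundary T Ts D e t)%:E)%E.

Definition is_pure (Ts : V -> V) : Prop :=
  forall h : V, (fun k : nat => ipnorm (iter k Ts h)) @ \oo --> (0 : R).

End Hilbert.

From HB Require Import structures.
From mathcomp Require Import all_boot all_order all_algebra.
From mathcomp Require Import all_classical all_reals all_analysis.
From mathcomp Require Import complex.
From mathcomp Require Import lra ring.
Import Order.TTheory GRing.Theory Num.Theory.
Import numFieldNormedType.Exports.
Local Open Scope classical_set_scope.
Local Open Scope ring_scope.
Set Implicit Arguments. Unset Strict Implicit. Unset Printing Implicit Defensive.

(* The examples are weighted bilateral shifts. On l^2(Z; C^N) let T e_(m,i) = e_(m+1,i),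
   except T e_(-1,i) = a e_(0,i) for a fixed 0 <= a < 1. Then 1 - T T^* is (1 - a^2)
   times the projection onto the N coordinates at 0, so D = sqrt(1 - a^2) P_0 has
   rank N; and T^* moves e_(-1,i) isometrically towards -oo, so T is not pure.
   For |c| < 1 both resolvents are explicit: (1 - conj(c) T)^-1 D e_(0,i) is
   d sum_(m >= 0) conj(c)^m e_(m,i), and applying D (1 - c T^* )^-1 to it and pairing
   with e_(0,i) gives d^2 / (1 - |c|^2). So the integrand of K(T) is N (1 - a^2) for
   every r < 1 and every z, hence K(T) = N (1 - a^2), which is any prescribed
   kappa > 0 for suitable N and a; kappa = 0 comes from the unitary shift (a = 1). *)

Local Notation "\sum_ ( i <oo ) F" := (limn (series (fun i => F))) : ring_scope.

(** * Series *)

Section RealSeries.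
Variable R : realType.
Implicit Types u v w : nat -> R.

Definition bounded_series u := exists B : R, forall n, series u n <= B.
Definition abs_summable u := bounded_series (fun k => `|u k|).

Lemma seriesE u n : series u n = \sum_(0 <= k < n) u k.
Proof. by []. Qed.

Lemma series_ge0 u n : (forall k, 0 <= u k) -> 0 <= series u n.
Proof. by move=> u0; rewrite seriesE sumr_ge0. Qed.

Lemma nondecreasing_series_ge0 u : (forall k, 0 <= u k) ->
  {homo series u : n m / (n <= m)%N >-> n <= m}.
Proof. by move=> u0; apply: nondecreasing_series => n _ _; exact: u0. Qed.

Lemma cvg_series_bounded_ge0 u : (forall k, 0 <= u k) -> bounded_series u ->
  cvgn (series u).
Proof.
move=> u0 [B hB]; apply/cvg_ex; eexists.
apply: nondecreasing_cvgn; first exact: nondecreasing_series_ge0.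
by exists B => _ [n _ <-].
Qed.

Lemma cvg_series_abs_summable u : abs_summable u -> cvgn (series u).
Proof.
move=> hu; apply: normed_cvg.
by apply: cvg_series_bounded_ge0 => // k; exact: normr_ge0.
Qed.

Lemma bounded_series_le u v : (forall k, u k <= v k) -> bounded_series v ->
  bounded_series u.
Proof.
move=> uv [B hB]; exists B => n; apply: le_trans (hB n).
by rewrite !seriesE; apply: ler_sum => k _; exact: uv.
Qed.

Lemma bounded_seriesD u v : bounded_series u -> bounded_series v ->
  bounded_series (fun k => u k + v k).
Proof.
move=> [B1 h1] [B2 h2]; exists (B1 + B2) => n.
by rewrite seriesE big_split /=; apply: lerD; rewrite -seriesE.
Qed.

Lemma bounded_seriesZ (c : R) u : 0 <= c -> bounded_series u ->
  bounded_series (fun k => c * u k).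
Proof.
move=> c0 [B h]; exists (c * B) => n.
by rewrite seriesE -mulr_sumr ler_wpM2l // -seriesE.
Qed.

Lemma series_shift u n : series u n.+1 = u 0%N + series (fun k => u k.+1) n.
Proof. by rewrite !seriesE big_nat_recl. Qed.

Lemma bounded_seriesS u : (forall k, 0 <= u k) -> bounded_series u ->
  bounded_series (fun k => u k.+1).
Proof.
move=> u0 [B hB]; exists B => n; apply: le_trans (hB n.+1).
by rewrite series_shift lerDr.
Qed.

Lemma bounded_series_tail u : bounded_series (fun k => u k.+1) -> bounded_series u.
Proof.
move=> [B hB]; exists (`|u 0%N| + B) => -[|n].
  by rewrite seriesE big_geq // addr_ge0 // (le_trans _ (hB 0%N)) // seriesE big_geq.
by rewrite series_shift lerD // ler_norm.
Qed.

Lemma bounded_series_geometric (q : R) : 0 <= q -> q < 1 ->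
  bounded_series (fun k => q ^+ k).
Proof.
move=> q0 q1; exists (1 - q)^-1 => n.
have -> : (fun k => q ^+ k) = geometric 1 q.
  by apply/funext => k; rewrite /geometric /= mul1r.
rewrite geometric_seriesE ?lt_eqF //= mul1r.
rewrite -[X in _ <= X]mul1r ler_pM2r ?invr_gt0 ?subr_gt0 //.
by rewrite lerBlDr lerDl exprn_ge0.
Qed.

Lemma series_le_lim u n : (forall k, 0 <= u k) -> bounded_series u ->
  series u n <= \sum_(k <oo) u k.
Proof.
move=> u0 hu; apply: nondecreasing_cvgn_le; first exact: nondecreasing_series_ge0.
exact: cvg_series_bounded_ge0.
Qed.

Lemma lim_series_le u (B : R) : cvgn (series u) -> (forall n, series u n <= B) ->
  \sum_(k <oo) u k <= B.
Proof. by move=> hc hB; apply: limr_le => //; exact: nearW. Qed.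

Lemma lim_series_ge0 u : (forall k, 0 <= u k) -> bounded_series u ->
  0 <= \sum_(k <oo) u k.
Proof. by move=> u0 hu; apply: le_trans (series_le_lim 0 u0 hu); rewrite seriesE big_geq. Qed.

Lemma lim_series_shift u : cvgn (series u) ->
  \sum_(k <oo) u k = u 0%N + \sum_(k <oo) u k.+1.
Proof.
move=> hu.
have h : series (fun k => u k.+1) @ \oo --> \sum_(k <oo) u k - u 0%N.
  have -> : series (fun k => u k.+1) = (fun n => series u n.+1 - u 0%N).
    by apply/funext => n; rewrite series_shift addrC addKr.
  apply: cvgB; last exact: cvg_cst.
  by rewrite (cvg_shiftS (series u)); exact: hu.
by rewrite (cvg_lim _ h) // addrC subrK.
Qed.

Lemma lim_series_lincomb (a b : R) u v w :
  cvgn (series u) -> cvgn (series v) -> cvgn (series w) ->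
  \sum_(k <oo) (a * u k + b * v k + w k) =
    a * \sum_(k <oo) u k + b * \sum_(k <oo) v k + \sum_(k <oo) w k.
Proof.
move=> cu cv cw.
have cau := is_cvg_seriesZ (k := a) cu; have cbv := is_cvg_seriesZ (k := b) cv.
rewrite [LHS](lim_seriesD (is_cvg_seriesD cau cbv) cw) [X in X + _](lim_seriesD cau cbv).
by rewrite [X in X + _ + _](lim_seriesZ a cu) [X in _ + X + _](lim_seriesZ b cv).
Qed.

Lemma lim_series_single u : (forall k, u k.+1 = 0) -> \sum_(k <oo) u k = u 0%N.
Proof.
move=> h; have hc : series u @ \oo --> u 0%N.
  apply: cvg_near_cst; exists 1%N => // n /= n1.
  case: n n1 => // n _; rewrite series_shift.
  by rewrite seriesE big1 ?addr0 // => k _; rewrite h.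
by rewrite (cvg_lim _ hc).
Qed.

Lemma lim_series_eq0 u : (forall k, 0 <= u k) -> bounded_series u ->
  \sum_(k <oo) u k = 0 -> forall k, u k = 0.
Proof.
move=> u0 hu s0 k; apply/eqP; rewrite eq_le u0 andbT.
have := series_le_lim k.+1 u0 hu; rewrite s0 seriesE big_nat_recr //=.
by apply: le_trans; rewrite lerDr sumr_ge0.
Qed.

End RealSeries.

Section ComplexSquaredNorm.
Variable R : rcfType.
Local Notation C := R[i].

Definition sqnorm (z : C) : R := complex.Re z ^+ 2 + complex.Im z ^+ 2.

Lemma sqnorm_ge0 z : 0 <= sqnorm z.
Proof. by rewrite /sqnorm addr_ge0 // sqr_ge0. Qed.

Lemma sqnorm0 : sqnorm 0 = 0.
Proof. by rewrite /sqnorm /= expr0n /= addr0. Qed.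

Lemma sqnorm_real (r : R) : sqnorm r%:C%C = r ^+ 2.
Proof. by rewrite /sqnorm /= expr0n /= addr0. Qed.

Lemma sqnormM (z w : C) : sqnorm (z * w) = sqnorm z * sqnorm w.
Proof. by case: z => ? ?; case: w => ? ?; rewrite /sqnorm /=; ring. Qed.

Lemma sqnormX (z : C) m : sqnorm (z ^+ m) = sqnorm z ^+ m.
Proof.
elim: m => [|m IH]; first by rewrite !expr0 sqnorm_real expr1n.
by rewrite !exprS sqnormM IH.
Qed.

Lemma sqnormJ (z : C) : sqnorm (conjc z) = sqnorm z.
Proof. by case: z => p q; rewrite /sqnorm /= sqrrN. Qed.

Lemma sqnormB (z w : C) : sqnorm (z - w) =
  (complex.Re z - complex.Re w) ^+ 2 + (complex.Im z - complex.Im w) ^+ 2.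
Proof. by case: z => ? ?; case: w. Qed.

Lemma mulcJ_sqnorm (z : C) : z * conjc z = (sqnorm z)%:C%C.
Proof. by case: z => p r; rewrite /sqnorm /=; congr (Complex _ _); ring. Qed.

Lemma sqnorm_scale_addr_le (a z w : C) :
  sqnorm (a * z + w) <= 2 * sqnorm a * sqnorm z + 2 * sqnorm w.
Proof.
rewrite -mulrA -sqnormM.
case: (a * z) => p q; case: w => w1 w2; rewrite /sqnorm /=.
have h1 := sqr_ge0 (p - w1); have h2 := sqr_ge0 (q - w2); nra.
Qed.

Lemma normr_Re_mulcJ_le (z w : C) :
  `|complex.Re (z * conjc w)| <= sqnorm z + sqnorm w.
Proof.
case: z => a b; case: w => c e; rewrite /sqnorm /= ler_norml; apply/andP; split.
  have := sqr_ge0 (a + c); have := sqr_ge0 (b - e); nra.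
have := sqr_ge0 (a - c); have := sqr_ge0 (b + e); nra.
Qed.

Lemma normr_Im_mulcJ_le (z w : C) :
  `|complex.Im (z * conjc w)| <= sqnorm z + sqnorm w.
Proof.
case: z => a b; case: w => c e; rewrite /sqnorm /= ler_norml; apply/andP; split.
  have := sqr_ge0 (a + e); have := sqr_ge0 (b + c); nra.
have := sqr_ge0 (a - e); have := sqr_ge0 (b - c); nra.
Qed.

Lemma conjc_realM (r : R) (w : C) : conjc (r%:C%C * w) = r%:C%C * conjc w.
Proof. by rewrite rmorphM /= oppr0. Qed.

Lemma Re_real_mulcJ (r : R) (z : C) : complex.Re (r%:C%C * z * conjc z) = r * sqnorm z.
Proof. by case: z => p q; rewrite /sqnorm /=; ring. Qed.

Lemma Re_sum (I : Type) (s : seq I) (P : pred I) (f : I -> C) :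
  complex.Re (\sum_(i <- s | P i) f i) = \sum_(i <- s | P i) complex.Re (f i).
Proof. by elim/big_rec2: _ => // i y1 y2 _ <-; case: (f i); case: y2. Qed.

Lemma Im_sum (I : Type) (s : seq I) (P : pred I) (f : I -> C) :
  complex.Im (\sum_(i <- s | P i) f i) = \sum_(i <- s | P i) complex.Im (f i).
Proof. by elim/big_rec2: _ => // i y1 y2 _ <-; case: (f i); case: y2. Qed.

Lemma sum_sqnorm_single (N : nat) (f : 'I_N -> C) i :
  (forall j, j != i -> f j = 0) -> \sum_(j < N) sqnorm (f j) = sqnorm (f i).
Proof. by move=> h; rewrite (bigD1 i) //= big1 ?addr0 // => j /h ->; exact: sqnorm0. Qed.

End ComplexSquaredNorm.

(** * The Hilbert space l^2(Z; C^N) *)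

Section Ell2.
Variables (R : realType) (N : nat).
Local Notation C := R[i].

(* x true m is the coordinate of x at m >= 0, and x false m the one at -1 - m. *)
Definition bseq := (bool -> nat -> 'I_N -> C)%type.

Lemma bseqE (c : C) (f g : bseq) s m i : (c *: f + g) s m i = c * f s m i + g s m i.
Proof. by []. Qed.

Lemma bseqZ (c : C) (f : bseq) s m i : (c *: f) s m i = c * f s m i.
Proof. by []. Qed.

Lemma bseqB (f g : bseq) s m i : (f - g) s m i = f s m i - g s m i.
Proof. by []. Qed.

Definition vsqnorm (x : bseq) (s : bool) (m : nat) : R := \sum_(i < N) sqnorm (x s m i).

Definition square_summable (x : bseq) := forall s, bounded_series (vsqnorm x s).
Definition l2 : {pred bseq} := mem [set x | square_summable x].

Lemma vsqnorm_ge0 x s m : 0 <= vsqnorm x s m.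
Proof. by apply: sumr_ge0 => i _; exact: sqnorm_ge0. Qed.

Lemma l2_submod_closed : submod_closed l2.
Proof.
split.
  rewrite inE /= => s; exists 0 => n; rewrite seriesE big1 // => m _.
  by rewrite /vsqnorm big1 // => i _; exact: sqnorm0.
move=> a x y; rewrite !inE /= => hx hy s.
apply: (@bounded_series_le _ _ (fun m => 2 * sqnorm a * vsqnorm x s m + 2 * vsqnorm y s m)).
  move=> m; rewrite /vsqnorm !mulr_sumr -big_split /=.
  by apply: ler_sum => i _; exact: sqnorm_scale_addr_le.
by apply: bounded_seriesD; apply: bounded_seriesZ; rewrite ?mulr_ge0 ?sqnorm_ge0.
Qed.

HB.instance Definition _ := GRing.isSubmodClosed.Build C bseq l2 l2_submod_closed.

Record ell2 := Ell2 { ell2_val : bseq; ell2_valP : ell2_val \in l2 }.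
HB.instance Definition _ := [isSub for ell2_val].
HB.instance Definition _ := [Choice of ell2 by <:].
HB.instance Definition _ := [SubChoice_isSubLmodule of ell2 by <:].

Lemma l2_cvg_series (x : bseq) s : x \in l2 -> cvgn (series (vsqnorm x s)).
Proof. by rewrite inE => hx; apply: cvg_series_bounded_ge0 (hx s) => k; exact: vsqnorm_ge0. Qed.

Definition origin_supported (x : bseq) :=
  (forall m i, x true m.+1 i = 0) /\ (forall m i, x false m i = 0).

Lemma l2_origin_supported (x : bseq) : origin_supported x -> x \in l2.
Proof.
move=> [h1 h2]; rewrite inE /= => -[|].
  apply: bounded_series_tail; exists 0 => n; rewrite seriesE big1 // => m _.
  by rewrite /vsqnorm big1 // => i _; rewrite h1 sqnorm0.
exists 0 => n; rewrite seriesE big1 // => m _.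
by rewrite /vsqnorm big1 // => i _; rewrite h2 sqnorm0.
Qed.

End Ell2.
Arguments l2 {R N}.

Section ComplexSeries.
Variable R : realType.
Local Notation C := R[i].
Implicit Types u v : nat -> C.

Definition series_sumC u : C :=
  ((\sum_(k <oo) complex.Re (u k)) +i* (\sum_(k <oo) complex.Im (u k)))%C.
Definition abs_summableC u :=
  abs_summable (fun k => complex.Re (u k)) /\ abs_summable (fun k => complex.Im (u k)).

Lemma series_sumC_linl (a : C) u v : abs_summableC u -> abs_summableC v ->
  series_sumC (fun k => a * u k + v k) = a * series_sumC u + series_sumC v.
Proof.
move=> [/cvg_series_abs_summable cu1 /cvg_series_abs_summable cu2].
move=> [/cvg_series_abs_summable cv1 /cvg_series_abs_summable cv2].
case: a => a1 a2; rewrite /series_sumC /=.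
have -> : (fun k => complex.Re ((a1 +i* a2)%C * u k + v k)) =
    (fun k => a1 * complex.Re (u k) + (- a2) * complex.Im (u k) + complex.Re (v k)).
  by apply/funext => k; case: (u k) => ? ?; case: (v k) => ? ? /=; ring.
have -> : (fun k => complex.Im ((a1 +i* a2)%C * u k + v k)) =
    (fun k => a1 * complex.Im (u k) + a2 * complex.Re (u k) + complex.Im (v k)).
  by apply/funext => k; case: (u k) => ? ?; case: (v k) => ? ? /=; ring.
by rewrite !lim_series_lincomb //; congr (_ +i* _)%C; ring.
Qed.

Lemma series_sumC_conj u : abs_summableC u ->
  series_sumC (fun k => conjc (u k)) = conjc (series_sumC u).
Proof.
move=> [_ /cvg_series_abs_summable hu2]; rewrite /series_sumC /=.
have -> : (fun k => complex.Re (conjc (u k))) = (fun k => complex.Re (u k)).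
  by apply/funext => k; case: (u k).
have -> : (fun k => complex.Im (conjc (u k))) = (fun k => -1 * complex.Im (u k)).
  by apply/funext => k; case: (u k) => ? ? /=; rewrite mulN1r.
by rewrite [X in (_ +i* X)%C](lim_seriesZ (-1) hu2) scaleN1r.
Qed.

Lemma series_sumC_shift u : abs_summableC u ->
  series_sumC u = u 0%N + series_sumC (fun k => u k.+1).
Proof.
move=> [/cvg_series_abs_summable h1 /cvg_series_abs_summable h2].
by rewrite /series_sumC (lim_series_shift h1) (lim_series_shift h2); case: (u 0%N).
Qed.

Lemma series_sumC_single u : (forall k, u k.+1 = 0) -> series_sumC u = u 0%N.
Proof.
move=> h; rewrite /series_sumC (@lim_series_single _ (fun k => complex.Re (u k))).
  rewrite (@lim_series_single _ (fun k => complex.Im (u k))); first by case: (u 0%N).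
  by move=> k; rewrite h.
by move=> k; rewrite h.
Qed.

End ComplexSeries.

Section InnerProduct.
Variables (R : realType) (N : nat).
Local Notation C := R[i].
Local Notation bseq := (bseq R N).
Local Notation ell2 := (ell2 R N).

Definition vdot (x y : bseq) (s : bool) (m : nat) : C :=
  \sum_(i < N) x s m i * conjc (y s m i).

Lemma vdot_linl (a : C) (x y z : bseq) s m :
  vdot (a *: x + y) z s m = a * vdot x z s m + vdot y z s m.
Proof. by rewrite /vdot mulr_sumr -big_split; apply: eq_bigr => i _; rewrite mulrDl mulrA. Qed.

Lemma vdotC (x y : bseq) s m : vdot y x s m = conjc (vdot x y s m).
Proof.
rewrite /vdot rmorph_sum; apply: eq_bigr => i _.
by rewrite rmorphM /= conjcK mulrC.
Qed.

Lemma vdotii (x : bseq) s m : vdot x x s m = (vsqnorm x s m)%:C%C.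
Proof.
rewrite /vdot /vsqnorm; apply/eqP; rewrite eq_complex Re_sum Im_sum /=.
apply/andP; split; apply/eqP; first by apply: eq_bigr => i _; rewrite mulcJ_sqnorm.
by rewrite big1 // => i _; rewrite mulcJ_sqnorm.
Qed.

Lemma abs_summable_vdot (x y : bseq) s : x \in l2 -> y \in l2 ->
  abs_summableC (vdot x y s).
Proof.
rewrite !inE => hx hy.
have hxy := bounded_seriesD (hx s) (hy s).
split; apply: bounded_series_le hxy => m; rewrite /vdot ?Re_sum ?Im_sum /vsqnorm -big_split;
  apply: le_trans (ler_norm_sum _ _ _) _; apply: ler_sum => i _.
  exact: normr_Re_mulcJ_le.
exact: normr_Im_mulcJ_le.
Qed.

Definition l2_ip (x y : ell2) : C :=
  series_sumC (vdot (val x) (val y) true) + series_sumC (vdot (val x) (val y) false).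

Definition l2_sqnorm (x : bseq) : R :=
  \sum_(k <oo) vsqnorm x true k + \sum_(k <oo) vsqnorm x false k.

Lemma l2_ip_linl (a : C) (x y z : ell2) : l2_ip (a *: x + y) z = a * l2_ip x z + l2_ip y z.
Proof.
rewrite /l2_ip /=.
have e s : vdot (a *: val x + val y) (val z) s =
    (fun m => a * vdot (val x) (val z) s m + vdot (val y) (val z) s m).
  by apply/funext => m; exact: vdot_linl.
rewrite !e !series_sumC_linl; try by apply: abs_summable_vdot; exact: ell2_valP.
ring.
Qed.

Lemma l2_ipC (x y : ell2) : l2_ip y x = conjc (l2_ip x y).
Proof.
have e s : vdot (val y) (val x) s = (fun m => conjc (vdot (val x) (val y) s m)).
  by apply/funext => m; exact: vdotC.
rewrite /l2_ip !e !series_sumC_conj ?rmorphD //; apply: abs_summable_vdot; exact: ell2_valP.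
Qed.

Lemma l2_ipii (x : ell2) : l2_ip x x = (l2_sqnorm (val x))%:C%C.
Proof.
have e s : vdot (val x) (val x) s = (fun m => (vsqnorm (val x) s m)%:C%C).
  by apply/funext => m; exact: vdotii.
rewrite /l2_ip /series_sumC !e /= !(@lim_series_single _ (fun=> 0)) //.
by apply/eqP; rewrite eq_complex /= addr0 !eqxx.
Qed.

Lemma l2_sqnorm_ge0 (x : bseq) : x \in l2 -> 0 <= l2_sqnorm x.
Proof. by rewrite inE => hx; rewrite addr_ge0 // lim_series_ge0 // => k; exact: vsqnorm_ge0. Qed.

Lemma l2_sqnorm_eq0 (x : bseq) : x \in l2 -> l2_sqnorm x = 0 -> x = 0.
Proof.
move=> hx; have := hx; rewrite inE => hx' h0.
have hs s : \sum_(k <oo) vsqnorm x s k = 0.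
  have t0 := lim_series_ge0 (vsqnorm_ge0 x true) (hx' true).
  have f0 := lim_series_ge0 (vsqnorm_ge0 x false) (hx' false).
  by move: h0; rewrite /l2_sqnorm; case: s; lra.
apply/funext => s; apply/funext => m; apply/funext => i.
have := lim_series_eq0 (vsqnorm_ge0 x s) (hx' s) (hs s) m.
move/(psumr_eq0P (fun j _ => sqnorm_ge0 (x s m j)))/(_ i isT).
rewrite /sqnorm; case: (x s m i) => a b /= e.
have a0 : a = 0 by have := sqr_ge0 a; have := sqr_ge0 b; nra.
have b0 : b = 0 by have := sqr_ge0 a; have := sqr_ge0 b; nra.
by rewrite a0 b0.
Qed.

Lemma ipnorm_l2 (x : ell2) : ipnorm l2_ip x = Num.sqrt (l2_sqnorm (val x)).
Proof. by rewrite /ipnorm l2_ipii. Qed.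

Lemma l2_inner_product : is_inner_product l2_ip.
Proof.
split.
- exact: l2_ip_linl.
- exact: l2_ipC.
- by move=> x; rewrite l2_ipii lecE /= eqxx l2_sqnorm_ge0 // ell2_valP.
- move=> x; rewrite l2_ipii => -[h]; apply: val_inj.
  exact: l2_sqnorm_eq0 (ell2_valP x) h.
Qed.

End InnerProduct.
Arguments l2_ip {R N}.

Section RealLimits.
Variable R : realType.

Lemma cvgn_of_cauchy (w : nat -> R) :
  (forall e : R, 0 < e -> exists N0, forall n, (N0 <= n)%N -> `|w N0 - w n| < e) ->
  cvgn w.
Proof.
move=> hw; apply: R_complete; apply: cauchy_exP => e e0.
by have [N0 hN] := hw e e0; exists (w N0), N0.
Qed.

Lemma cvg_sum_seq (I : Type) (s : seq I) (f : I -> nat -> R) (l : I -> R) :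
  (forall i, f i @ \oo --> l i) ->
  (fun k => \sum_(i <- s) f i k) @ \oo --> \sum_(i <- s) l i.
Proof. by move=> h; apply: cvg_big => //; exact: add_continuous. Qed.

Lemma normr_lt_sqr (a e : R) : 0 < e -> a ^+ 2 < e ^+ 2 -> `|a| < e.
Proof. by move=> e0 h; rewrite ltr_norml; apply/andP; split; nra. Qed.

Lemma sqrtr_lt_sqr (a e : R) : 0 < e -> (Num.sqrt a < e) = (a < e ^+ 2).
Proof.
move=> e0; rewrite -[in LHS](@gtr0_norm _ e) // -sqrtr_sqr ltr_sqrt //.
by rewrite exprn_gt0.
Qed.

End RealLimits.

Section PartialSquaredNorm.
Variables (R : realType) (N : nat).
Local Notation bseq := (bseq R N).

Definition partial_sqnorm (x : bseq) (M : nat) : R :=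
  series (vsqnorm x true) M + series (vsqnorm x false) M.

Lemma partial_sqnormE (x : bseq) M : partial_sqnorm x M =
  \sum_(s <- [:: true; false]) \sum_(m <- index_iota 0 M) \sum_(i < N) sqnorm (x s m i).
Proof. by rewrite /partial_sqnorm big_cons big_cons big_nil addr0. Qed.

Lemma series_le_partial_sqnorm (x : bseq) s M : series (vsqnorm x s) M <= partial_sqnorm x M.
Proof.
by rewrite /partial_sqnorm; case: s; rewrite ?lerDl ?lerDr series_ge0 // => k; exact: vsqnorm_ge0.
Qed.

Lemma partial_sqnorm_le (x : bseq) M : x \in l2 -> partial_sqnorm x M <= l2_sqnorm x.
Proof.
by rewrite inE => hx; apply: lerD; apply: series_le_lim => // k; exact: vsqnorm_ge0.
Qed.

Lemma l2_partial_sqnorm_bounded (x : bseq) (e : R) :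
  (forall M, partial_sqnorm x M <= e) -> x \in l2.
Proof. by move=> h; rewrite inE => s; exists e => M; exact: le_trans (series_le_partial_sqnorm x s M) (h M). Qed.

Lemma l2_sqnorm_le (x : bseq) (e : R) :
  (forall M, partial_sqnorm x M <= e) -> l2_sqnorm x <= e.
Proof.
move=> h; have := l2_partial_sqnorm_bounded h; rewrite inE => hx.
have cx s := cvg_series_bounded_ge0 (vsqnorm_ge0 x s) (hx s).
rewrite /l2_sqnorm -lim_seriesD //.
apply: lim_series_le; first exact: is_cvg_seriesD.
by move=> M; rewrite seriesD; exact: h.
Qed.

Lemma vsqnorm_le_l2_sqnorm (x : bseq) s m : x \in l2 -> vsqnorm x s m <= l2_sqnorm x.
Proof.
move=> hx; apply: le_trans (partial_sqnorm_le m.+1 hx).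
apply: le_trans (series_le_partial_sqnorm x s m.+1).
by rewrite seriesSr ler_wpDl ?series_ge0 // => k; exact: vsqnorm_ge0.
Qed.

Lemma sqnorm_coord_le (x : bseq) s m i : x \in l2 -> sqnorm (x s m i) <= l2_sqnorm x.
Proof.
move=> hx; apply: le_trans (vsqnorm_le_l2_sqnorm s m hx).
by rewrite /vsqnorm (bigD1 i) //= lerDl sumr_ge0 // => j _; exact: sqnorm_ge0.
Qed.

End PartialSquaredNorm.

Section Completeness.
Variables (R : realType) (N : nat).
Local Notation bseq := (bseq R N).
Variable u : nat -> bseq.
Hypothesis u_l2 : forall j, u j \in l2.
Hypothesis u_cauchy : forall e : R, 0 < e -> exists N0, forall m k,
  (N0 <= m)%N -> (N0 <= k)%N -> l2_sqnorm (u m - u k) < e.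

Let uB_l2 m k : u m - u k \in l2.
Proof. exact: rpredB. Qed.

Lemma cvgn_coord_Re s m i : cvgn (fun j => complex.Re (u j s m i)).
Proof.
apply: cvgn_of_cauchy => e e0.
have [N0 h] := u_cauchy (exprn_gt0 2 e0); exists N0 => n hn.
apply: normr_lt_sqr => //; apply: le_lt_trans (h N0 n (leqnn _) hn).
apply: le_trans (sqnorm_coord_le s m i (uB_l2 N0 n)).
by rewrite sqnormB /= lerDl sqr_ge0.
Qed.

Lemma cvgn_coord_Im s m i : cvgn (fun j => complex.Im (u j s m i)).
Proof.
apply: cvgn_of_cauchy => e e0.
have [N0 h] := u_cauchy (exprn_gt0 2 e0); exists N0 => n hn.
apply: normr_lt_sqr => //; apply: le_lt_trans (h N0 n (leqnn _) hn).
apply: le_trans (sqnorm_coord_le s m i (uB_l2 N0 n)).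
by rewrite sqnormB /= lerDr sqr_ge0.
Qed.

Definition coord_lim : bseq := fun s m i =>
  (limn (fun j => complex.Re (u j s m i)) +i* limn (fun j => complex.Im (u j s m i)))%C.

Lemma cvg_partial_sqnorm j M :
  (fun k => partial_sqnorm (u j - u k) M) @ \oo --> partial_sqnorm (u j - coord_lim) M.
Proof.
rewrite partial_sqnormE; under eq_fun do rewrite partial_sqnormE.
apply: cvg_sum_seq => s; apply: cvg_sum_seq => m; apply: cvg_sum_seq => i.
rewrite sqnormB; under eq_fun do rewrite sqnormB.
have hr := @cvgn_coord_Re s m i; have hi := @cvgn_coord_Im s m i.
rewrite /coord_lim /= !expr2.
by apply: cvgD; apply: cvgM; apply: cvgB; try exact: cvg_cst.
Qed.

Lemma partial_sqnorm_coord_lim_small e : 0 < e -> exists N0, forall j, (N0 <= j)%N ->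
  forall M, partial_sqnorm (u j - coord_lim) M <= e.
Proof.
move=> e0; have [N0 h] := u_cauchy e0; exists N0 => j hj M.
rewrite -(cvg_lim _ (@cvg_partial_sqnorm j M)) //; apply: limr_le.
  by apply/cvg_ex; eexists; exact: cvg_partial_sqnorm.
exists N0 => // k /= hk; apply: le_trans (partial_sqnorm_le M (uB_l2 j k)) _.
exact: ltW (h j k hj hk).
Qed.

Lemma coord_lim_l2 : coord_lim \in l2.
Proof.
have [N0 h] := partial_sqnorm_coord_lim_small ltr01.
have := rpredB (u_l2 N0) (l2_partial_sqnorm_bounded (h N0 (leqnn _))).
by rewrite opprB addrC subrK.
Qed.

End Completeness.

Lemma l2_complete (R : realType) (N : nat) : ip_complete (@l2_ip R N).
Proof.
move=> u hu.
have u_cauchy e : 0 < e -> exists N0, forall m k, (N0 <= m)%N -> (N0 <= k)%N ->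
    l2_sqnorm (val (u m) - val (u k)) < e.
  move=> e0; have [|N0 h] := hu (Num.sqrt e); first by rewrite sqrtr_gt0.
  exists N0 => m k hm hk; have := h m k hm hk.
  by rewrite ipnorm_l2 sqrtr_lt_sqr ?sqrtr_gt0 // sqr_sqrtr // ltW.
have u_l2 j := ell2_valP (u j).
exists (Ell2 (coord_lim_l2 u_l2 u_cauchy)) => eps eps0.
have e2 : 0 < eps ^+ 2 / 2 by rewrite divr_gt0 // exprn_gt0.
have [N0 h] := partial_sqnorm_coord_lim_small u_l2 u_cauchy e2.
exists N0 => m hm; rewrite ipnorm_l2 sqrtr_lt_sqr //.
apply: le_lt_trans (l2_sqnorm_le (h m hm)) _.
by rewrite ltr_pdivrMr // ltr_pMr ?exprn_gt0 // ltr1n.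
Qed.

Lemma l2_hilbert (R : realType) (N : nat) : is_hilbert (@l2_ip R N).
Proof. by split; [exact: l2_inner_product | exact: l2_complete]. Qed.

(** * The weighted bilateral shift and its defect operator *)

Section WeightedShift.
Variables (R : realType) (N : nat) (a : R).
Local Notation C := R[i].
Local Notation bseq := (bseq R N).
Local Notation ell2 := (ell2 R N).

Definition wshiftF (x : bseq) : bseq := fun s m i =>
  if s then (if m is m'.+1 then x true m' i else a%:C%C * x false 0%N i)
  else x false m.+1 i.

Definition wshift_adjF (y : bseq) : bseq := fun s m i =>
  if s then y true m.+1 i
  else (if m is m'.+1 then y false m' i else a%:C%C * y true 0%N i).

Lemma vsqnorm_scale (r : C) (x : bseq) s m :
  vsqnorm (fun s m i => r * x s m i) s m = sqnorm r * vsqnorm x s m.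
Proof. by rewrite /vsqnorm mulr_sumr; apply: eq_bigr => i _; rewrite sqnormM. Qed.

Lemma wshiftF_l2 (x : bseq) : x \in l2 -> wshiftF x \in l2.
Proof.
rewrite !inE => hx [|]; last exact: bounded_seriesS (vsqnorm_ge0 x false) (hx false).
by apply: bounded_series_tail; apply: bounded_series_le (hx true) => k.
Qed.

Lemma wshift_adjF_l2 (x : bseq) : x \in l2 -> wshift_adjF x \in l2.
Proof.
rewrite !inE => hx [|]; first exact: bounded_seriesS (vsqnorm_ge0 x true) (hx true).
by apply: bounded_series_tail; apply: bounded_series_le (hx false) => k.
Qed.

Definition wshift (v : ell2) : ell2 := Ell2 (wshiftF_l2 (ell2_valP v)).
Definition wshift_adj (v : ell2) : ell2 := Ell2 (wshift_adjF_l2 (ell2_valP v)).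

Lemma wshift_linear : is_linear_op wshift.
Proof.
move=> c x y; apply: val_inj; apply/funext => s; apply/funext => m; apply/funext => i.
by case: s; case: m => [|m]; rewrite /= !bseqE /= ?bseqE; ring.
Qed.

Lemma wshift_adj_linear : is_linear_op wshift_adj.
Proof.
move=> c x y; apply: val_inj; apply/funext => s; apply/funext => m; apply/funext => i.
by case: s; case: m => [|m]; rewrite /= !bseqE /= ?bseqE; ring.
Qed.

Lemma l2_sqnorm_wshift (x : bseq) : x \in l2 ->
  l2_sqnorm (wshiftF x) = l2_sqnorm x - (1 - a ^+ 2) * vsqnorm x false 0%N.
Proof.
move=> hx; rewrite /l2_sqnorm (lim_series_shift (l2_cvg_series (s := true) (wshiftF_l2 hx))).
rewrite [X in _ = _ + X - _](lim_series_shift (l2_cvg_series (s := false) hx)).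
have -> : vsqnorm (wshiftF x) true 0%N = a ^+ 2 * vsqnorm x false 0%N.
  by rewrite -sqnorm_real -vsqnorm_scale.
have -> : (fun k => vsqnorm (wshiftF x) true k.+1) = vsqnorm x true by [].
have -> : vsqnorm (wshiftF x) false = (fun k => vsqnorm x false k.+1) by [].
ring.
Qed.

Lemma l2_sqnorm_wshift_adj (x : bseq) : x \in l2 ->
  l2_sqnorm (wshift_adjF x) = l2_sqnorm x - (1 - a ^+ 2) * vsqnorm x true 0%N.
Proof.
move=> hx; rewrite /l2_sqnorm (lim_series_shift (l2_cvg_series (s := false) (wshift_adjF_l2 hx))).
rewrite [X in _ = X + _ - _](lim_series_shift (l2_cvg_series (s := true) hx)).
have -> : vsqnorm (wshift_adjF x) false 0%N = a ^+ 2 * vsqnorm x true 0%N.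
  by rewrite -sqnorm_real -vsqnorm_scale.
have -> : (fun k => vsqnorm (wshift_adjF x) false k.+1) = vsqnorm x false by [].
have -> : vsqnorm (wshift_adjF x) true = (fun k => vsqnorm x true k.+1) by [].
ring.
Qed.

Lemma wshift_adjoint : is_adjoint l2_ip wshift wshift_adj.
Proof.
move=> x y; have hx := ell2_valP x; have hy := ell2_valP y; rewrite /l2_ip /=.
rewrite (series_sumC_shift (abs_summable_vdot true (wshiftF_l2 hx) hy)).
rewrite [X in _ = _ + X](series_sumC_shift (abs_summable_vdot false hx (wshift_adjF_l2 hy))).
have -> : vdot (wshiftF (val x)) (val y) true 0%N = vdot (val x) (wshift_adjF (val y)) false 0%N.
  rewrite /vdot; apply: eq_bigr => i _ /=.
  by case: (val x false 0%N i) => ? ?; case: (val y true 0%N i) => ? ? /=; congr (_ +i* _)%C; ring.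
have -> : (fun k => vdot (wshiftF (val x)) (val y) true k.+1) =
    vdot (val x) (wshift_adjF (val y)) true by [].
have -> : (fun k => vdot (val x) (wshift_adjF (val y)) false k.+1) =
    vdot (wshiftF (val x)) (val y) false by [].
ring.
Qed.

Hypothesis a_le1 : a ^+ 2 <= 1.

Lemma l2_sqnorm_wshift_le (x : ell2) : l2_sqnorm (val (wshift x)) <= l2_sqnorm (val x).
Proof.
by rewrite l2_sqnorm_wshift ?ell2_valP // lerBlDr lerDl mulr_ge0 ?vsqnorm_ge0 ?subr_ge0.
Qed.

Lemma l2_sqnorm_wshift_adj_le (x : ell2) : l2_sqnorm (val (wshift_adj x)) <= l2_sqnorm (val x).
Proof.
by rewrite l2_sqnorm_wshift_adj ?ell2_valP // lerBlDr lerDl mulr_ge0 ?vsqnorm_ge0 ?subr_ge0.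
Qed.

Lemma wshift_contraction : is_contraction_op l2_ip wshift.
Proof.
split; first exact: wshift_linear.
by move=> x; rewrite !ipnorm_l2 ler_sqrt ?l2_sqnorm_wshift_le ?l2_sqnorm_ge0 ?ell2_valP.
Qed.

End WeightedShift.

Section Origin.
Variables (R : realType) (N : nat).
Local Notation C := R[i].
Local Notation bseq := (bseq R N).
Local Notation ell2 := (ell2 R N).

Lemma l2_ip_origin_l (x y : ell2) : origin_supported (val x) ->
  l2_ip x y = vdot (val x) (val y) true 0%N.
Proof.
move=> [h1 h2]; rewrite /l2_ip (@series_sumC_single _ (vdot _ _ true)); last first.
  by move=> k; rewrite /vdot big1 // => i _; rewrite h1 mul0r.
rewrite (@series_sumC_single _ (vdot _ _ false)); last first.
  by move=> k; rewrite /vdot big1 // => i _; rewrite h2 mul0r.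
by rewrite [vdot _ _ false 0%N]/vdot big1 ?addr0 // => i _; rewrite h2 mul0r.
Qed.

Lemma l2_ip_origin_r (x y : ell2) : origin_supported (val y) ->
  l2_ip x y = vdot (val x) (val y) true 0%N.
Proof. by move=> hy; rewrite -[LHS]conjcK -l2_ipC l2_ip_origin_l // -vdotC. Qed.

Definition origin_basisF (i : 'I_N) : bseq := fun s m j =>
  if s then (if m is 0%N then (if j == i then 1 else 0) else 0) else 0.

Lemma origin_basisF_supported i : origin_supported (origin_basisF i).
Proof. by []. Qed.

Definition origin_basis (i : 'I_N) : ell2 := Ell2 (l2_origin_supported (origin_basisF_supported i)).

Lemma origin_basis_orthonormal i j : l2_ip (origin_basis i) (origin_basis j) = (i == j)%:R.
Proof.
rewrite l2_ip_origin_l // /vdot /= (bigD1 i) //= eqxx mul1r big1 ?addr0.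
  by case: (i == j) => /=; rewrite oppr0.
by move=> k /negbTE ->; rewrite mul0r.
Qed.

Variable d : R.

Definition defectF (x : bseq) : bseq := fun s m i =>
  if s then (if m is 0%N then d%:C%C * x true 0%N i else 0) else 0.

Lemma defectF_supported x : origin_supported (defectF x).
Proof. by []. Qed.

Definition defect (v : ell2) : ell2 := Ell2 (l2_origin_supported (defectF_supported (val v))).

Lemma defect_linear : is_linear_op defect.
Proof.
move=> c x y; apply: val_inj; apply/funext => s; apply/funext => m; apply/funext => i.
by case: s; case: m => [|m]; rewrite /= ?bseqE /= ?bseqE; ring.
Qed.

Lemma defect_selfadjoint : is_adjoint l2_ip defect defect.
Proof.
move=> x y; rewrite l2_ip_origin_l // l2_ip_origin_r //.
by apply: eq_bigr => i _ /=; rewrite conjc_realM; ring.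
Qed.

Lemma l2_sqnorm_defect (x : bseq) : l2_sqnorm (defectF x) = d ^+ 2 * vsqnorm x true 0%N.
Proof.
have hf m : vsqnorm (defectF x) false m = 0.
  by rewrite /vsqnorm big1 // => i _; exact: sqnorm0.
have ht m : vsqnorm (defectF x) true m.+1 = 0.
  by rewrite /vsqnorm big1 // => i _; exact: sqnorm0.
rewrite /l2_sqnorm (lim_series_single ht) (lim_series_single (fun k => hf k.+1)) hf addr0.
by rewrite -sqnorm_real -vsqnorm_scale.
Qed.

Lemma defect_span (x : ell2) :
  defect x = \sum_(i < N) (d%:C%C * val x true 0%N i) *: origin_basis i.
Proof.
apply: val_inj; rewrite raddf_sum; apply/funext => s; apply/funext => m; apply/funext => j.
rewrite !fct_sumE /=; under eq_bigr do rewrite bseqZ /=.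
case: s; last by rewrite big1 // => i _; rewrite mulr0.
case: m => [|m]; last by rewrite big1 // => i _; rewrite mulr0.
rewrite (bigD1 j) //= eqxx mulr1 big1 ?addr0 // => i /negbTE.
by rewrite eq_sym => ->; rewrite mulr0.
Qed.

Lemma defect_finite_rank : finite_rank defect.
Proof. by exists N, origin_basis => x; eexists; exact: defect_span. Qed.

Hypothesis d_ge0 : 0 <= d.

Lemma defect_ge0 x : 0 <= l2_ip (defect x) x.
Proof.
rewrite l2_ip_origin_l // lecE /vdot Re_sum Im_sum /=; apply/andP; split.
  by rewrite big1 // => i _; case: (val x true 0%N i) => p q /=; ring.
by apply: sumr_ge0 => i _; rewrite Re_real_mulcJ mulr_ge0 // sqnorm_ge0.
Qed.

Hypothesis d_le1 : d ^+ 2 <= 1.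

Lemma defect_bounded : is_bounded_op l2_ip defect.
Proof.
split; first exact: defect_linear.
exists 1 => x; rewrite mul1r !ipnorm_l2 ler_sqrt ?l2_sqnorm_ge0 ?ell2_valP //= l2_sqnorm_defect.
apply: le_trans (vsqnorm_le_l2_sqnorm true 0%N (ell2_valP x)).
by rewrite ler_piMl // vsqnorm_ge0.
Qed.

Variable a : R.
Hypothesis defect_sqr : d ^+ 2 = 1 - a ^+ 2.

Lemma defect_defect x : defect (defect x) = x - wshift a (wshift_adj a x).
Proof.
have e t : d * (d * t) = t - a * (a * t) by rewrite mulrA -expr2 defect_sqr; ring.
apply: val_inj => /=; apply/funext => s; apply/funext => m; apply/funext => i.
rewrite bseqB; case: s; case: m => [|m] /=; try by rewrite subrr.
case: (val x true 0%N i) => p q /=; congr (_ +i* _)%C.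
  by transitivity (d * (d * p)); [ring | rewrite e; ring].
by transitivity (d * (d * q)); [ring | rewrite e; ring].
Qed.

Lemma defect_defect_op : is_defect_op l2_ip (wshift a) (wshift_adj a) defect.
Proof.
split; [exact: defect_bounded | exact: defect_selfadjoint | exact: defect_ge0 | exact: defect_defect].
Qed.

Hypothesis d_neq0 : d != 0.

Lemma defect_onb_range : is_onb_range l2_ip defect origin_basis.
Proof.
split; [exact: origin_basis_orthonormal | move=> i | by move=> x; eexists; exact: defect_span].
exists ((d^-1)%:C%C *: origin_basis i); apply: val_inj.
apply/funext => s; apply/funext => m; apply/funext => j.
case: s => //; case: m => //=; rewrite bseqZ /= mulrA -rmorphM /= mulfV //.
by rewrite mul1r.
Qed.

End Origin.

(** * Resolvents and curvature *)

Lemma inv_op_eq (R : realType) (V : lmodType R[i]) (A : V -> V) (v w : V) :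
  A w = v -> (forall y, A y = v -> y = w) -> inv_op A v = w.
Proof. by move=> h1 h2; apply: xget_unique. Qed.

Lemma linear_opB (R : realType) (V : lmodType R[i]) (O : V -> V) :
  is_linear_op O -> forall x y, O (x - y) = O x - O y.
Proof.
move=> hO x y; have := hO (-1) y x; rewrite !scaleN1r => e.
by rewrite [x - y]addrC e addrC.
Qed.

Section Injectivity.
Variables (R : realType) (N : nat).
Local Notation C := R[i].
Local Notation ell2 := (ell2 R N).

Lemma l2_sqnormZ (k : C) (w : ell2) : l2_sqnorm (val (k *: w)) = sqnorm k * l2_sqnorm (val w).
Proof.
have e s : vsqnorm (val (k *: w)) s = (fun m => sqnorm k * vsqnorm (val w) s m).
  by apply/funext => m; rewrite -vsqnorm_scale.
by rewrite /l2_sqnorm !e !lim_seriesZ ?mulrDr //; exact: l2_cvg_series (ell2_valP w).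
Qed.

Lemma sub_scale_contraction_inj (O : ell2 -> ell2) (k : C) : is_linear_op O ->
  (forall w, l2_sqnorm (val (O w)) <= l2_sqnorm (val w)) -> sqnorm k < 1 ->
  injective (fun w => w - k *: O w).
Proof.
move=> hO hc hk w1 w2 /= e.
have ew : w1 - w2 = k *: O (w1 - w2).
  rewrite linear_opB // scalerBr -{1}[w1](subrK (k *: O w1)) e.
  by rewrite addrAC [w2 - _ - w2]addrAC subrr sub0r addrC.
have h0 := l2_sqnorm_ge0 (ell2_valP (w1 - w2)).
have : (1 - sqnorm k) * l2_sqnorm (val (w1 - w2)) <= 0.
  by rewrite mulrBl mul1r subr_le0 {1}ew l2_sqnormZ ler_wpM2l ?sqnorm_ge0.
rewrite pmulr_rle0 ?subr_gt0 // => hle.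
have /eqP : w1 - w2 = 0.
  by apply: val_inj; apply: l2_sqnorm_eq0 (ell2_valP _) _; apply/eqP; rewrite eq_le hle h0.
by rewrite subr_eq0 => /eqP.
Qed.

End Injectivity.

Section Resolvent.
Variables (R : realType) (N : nat) (a d : R) (c : R[i]).
Local Notation C := R[i].
Local Notation bseq := (bseq R N).
Local Notation ell2 := (ell2 R N).
Hypothesis c_lt1 : sqnorm c < 1.
Let k := (1 - sqnorm c)^-1.

(* (1 - conj(c) T) telescopes sum_m conj(c)^m e_(m,i) to e_(0,i). *)
Definition geomF (i : 'I_N) : bseq := fun s m j =>
  if s && (j == i) then (conjc c) ^+ m else 0.

(* The solution X of (1 - c T^* ) X = geomF i: k conj(c)^m at m >= 0, and on the
   negative side X_(-1) = c a X_0, X_(-2-m) = c X_(-1-m). *)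
Definition resolventF (i : 'I_N) : bseq := fun s m j =>
  if j == i then (if s then (conjc c) ^+ m * k%:C%C else c ^+ m.+1 * (a * k)%:C%C)
  else 0.

Lemma geomF_l2 i : geomF i \in l2.
Proof.
rewrite inE => -[|]; last first.
  by exists 0 => n; rewrite seriesE big1 // => m _; rewrite /vsqnorm big1 // => j _; exact: sqnorm0.
apply: bounded_series_le (bounded_series_geometric (sqnorm_ge0 c) c_lt1) => m.
rewrite /vsqnorm (@sum_sqnorm_single _ _ (fun j => geomF i true m j) i) /geomF /= ?eqxx.
  by rewrite sqnormX sqnormJ.
by move=> j /negbTE ->.
Qed.

Lemma resolventF_l2 i : resolventF i \in l2.
Proof.
have hgeo := bounded_series_geometric (sqnorm_ge0 c) c_lt1.
rewrite inE => -[|].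
  apply: bounded_series_le (bounded_seriesZ (sqr_ge0 k) hgeo) => m.
  rewrite /vsqnorm (@sum_sqnorm_single _ _ (fun j => resolventF i true m j) i) /resolventF ?eqxx.
    by rewrite sqnormM sqnormX sqnormJ sqnorm_real mulrC.
  by move=> j /negbTE ->.
apply: bounded_series_le (bounded_seriesZ (mulr_ge0 (sqnorm_ge0 c) (sqr_ge0 (a * k))) hgeo) => m.
rewrite /vsqnorm (@sum_sqnorm_single _ _ (fun j => resolventF i false m j) i) /resolventF ?eqxx.
  by rewrite sqnormM sqnormX sqnorm_real exprS mulrAC.
by move=> j /negbTE ->.
Qed.

Definition geom i : ell2 := Ell2 (geomF_l2 i).
Definition resolvent i : ell2 := Ell2 (resolventF_l2 i).

Lemma geom_spec i :
  d%:C%C *: geom i - conjc c *: wshift a (d%:C%C *: geom i) = defect d (origin_basis R i).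
Proof.
apply: val_inj => /=; apply/funext => s; apply/funext => m; apply/funext => j.
rewrite bseqB !bseqZ /=.
by case: s; case: m => [|m] /=; rewrite ?bseqZ /geomF /=; case: (j == i); rewrite ?exprS; ring.
Qed.

Lemma sub_sqnorm_mulV : (1 - (sqnorm c)%:C%C) * k%:C%C = 1.
Proof.
have q1 : 1 - sqnorm c != 0 by rewrite subr_eq0 eq_sym lt_eqF.
apply/eqP; rewrite eq_complex /=; apply/andP; split; apply/eqP.
  by rewrite subrr !mulr0 subr0 mulfV.
by rewrite subrr !mulr0 mul0r addr0.
Qed.

Lemma resolvent_spec i :
  d%:C%C *: resolvent i - c *: wshift_adj a (d%:C%C *: resolvent i) = d%:C%C *: geom i.
Proof.
apply: val_inj => /=; apply/funext => s; apply/funext => m; apply/funext => j.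
rewrite bseqB !bseqZ /=.
case: s; case: m => [|m] /=; rewrite ?bseqZ /resolventF /geomF /=; case: (j == i); try ring.
- rewrite expr0 expr1.
  transitivity (d%:C%C * ((1 - c * conjc c) * k%:C%C)); first ring.
  by rewrite mulcJ_sqnorm sub_sqnorm_mulV mulr1.
- rewrite (exprS _ m.+1).
  transitivity (d%:C%C * (conjc c ^+ m.+1 * ((1 - c * conjc c) * k%:C%C))); first ring.
  by rewrite mulcJ_sqnorm sub_sqnorm_mulV mulr1.
- by rewrite (exprS _ m.+1); ring.
Qed.

End Resolvent.

Section Curvature.
Variables (R : realType) (N : nat) (a d : R).
Local Notation C := R[i].
Hypothesis a_le1 : a ^+ 2 <= 1.
Hypothesis defect_sqr : d ^+ 2 = 1 - a ^+ 2.

Lemma sqnorm_circ (t : R) : sqnorm (circ t) = 1.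
Proof. by rewrite /sqnorm /circ /= cos2Dsin2. Qed.

Lemma inv_op_inner (c : C) (c_lt1 : sqnorm c < 1) (i : 'I_N) :
  inv_op (fun w => w - conjc c *: wshift a w) (defect d (origin_basis R i)) =
  d%:C%C *: geom c_lt1 i.
Proof.
apply: inv_op_eq; first exact: geom_spec.
move=> y hy; apply: (@sub_scale_contraction_inj _ _ _ (conjc c) (wshift_linear a)).
- exact: l2_sqnorm_wshift_le.
- by rewrite sqnormJ.
- by rewrite /= hy geom_spec.
Qed.

Lemma inv_op_outer (c : C) (c_lt1 : sqnorm c < 1) (i : 'I_N) :
  inv_op (fun w => w - c *: wshift_adj a w) (d%:C%C *: geom c_lt1 i) =
  d%:C%C *: resolvent a c_lt1 i.
Proof.
apply: inv_op_eq; first exact: resolvent_spec.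
move=> y hy; apply: (@sub_scale_contraction_inj _ _ _ c (wshift_adj_linear a)) => //.
- exact: l2_sqnorm_wshift_adj_le.
- by rewrite /= hy resolvent_spec.
Qed.

Lemma Re_ip_defect_resolvent (c : C) (c_lt1 : sqnorm c < 1) (i : 'I_N) :
  complex.Re (l2_ip (defect d (d%:C%C *: resolvent a c_lt1 i)) (origin_basis R i)) =
  d ^+ 2 * (1 - sqnorm c)^-1.
Proof.
rewrite l2_ip_origin_r // /vdot Re_sum (bigD1 i) //= big1 ?addr0.
  by rewrite eqxx bseqZ /resolventF eqxx /=; ring.
by move=> j /negbTE hj; rewrite hj bseqZ /resolventF hj /=; ring.
Qed.

Lemma curv_integrand_wshift (t r : R) : 0 < r -> r < 1 ->
  curv_integrand l2_ip (wshift a) (wshift_adj a) (defect d) (@origin_basis R N) t r =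
  N%:R * (1 - a ^+ 2).
Proof.
move=> r0 r1; rewrite /curv_integrand /trace_on.
have r2 : sqnorm (r%:C%C * circ t) = r ^+ 2 by rewrite sqnormM sqnorm_real sqnorm_circ mulr1.
have c_lt1 : sqnorm (r%:C%C * circ t) < 1 by rewrite r2 expr_lt1 // ?ltW // gtr0_norm.
rewrite Re_sum.
under eq_bigr do rewrite (inv_op_inner c_lt1) (inv_op_outer c_lt1) Re_ip_defect_resolvent.
rewrite sumr_const card_ord r2 -mulr_natl -defect_sqr.
have : 1 - r ^+ 2 != 0 by rewrite subr_eq0 eq_sym lt_eqF // expr_lt1 // ?ltW // gtr0_norm.
by move=> ?; field.
Qed.

End Curvature.

Lemma curvature_const (R : realType) (V : lmodType R[i]) (ip : V -> V -> R[i])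
    (T Ts D : V -> V) (n : nat) (e : 'I_n -> V) (kappa : R) :
  (forall t r : R, 0 < r -> r < 1 -> curv_integrand ip T Ts D e t r = kappa) ->
  curvature ip T Ts D e = kappa%:E.
Proof.
move=> hI; rewrite /curvature.
have hb t : curv_boundary ip T Ts D e t = kappa.
  rewrite /curv_boundary; apply: lim_near_cst => //.
  near=> r; apply: hI; [near: r; exact: nbhs_left_gt | near: r; exact: nbhs_left_lt].
under eq_integral do rewrite hb.
rewrite integral_cst //= lebesgue_measure_itv /= lte_fin.
have p0 : 0 < 2 * pi :> R by rewrite mulr_gt0 // pi_gt0.
rewrite p0 oppr0 addr0 -!EFinM; congr (_%:E).
by rewrite mulrCA mulVf ?mulr1 // gt_eqF.
Unshelve. all: by end_near.
Qed.

Section NotPure.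
Variables (R : realType) (N : nat) (a : R).
Local Notation bseq := (bseq R N.+1).

Definition past_basisF (k : nat) : bseq := fun s m j =>
  if ~~ s && (m == k) && (j == ord0) then 1 else 0.

Lemma past_basisF0_l2 : past_basisF 0 \in l2.
Proof.
have zero s m : (s || (m != 0%N)) -> vsqnorm (past_basisF 0) s m = 0.
  move=> h; rewrite /vsqnorm big1 // => j _.
  by case: s m h => -[|m] //= _; rewrite sqnorm0.
rewrite inE => -[|].
  by exists 0 => n; rewrite seriesE big1 // => m _; rewrite zero.
by apply: bounded_series_tail; exists 0 => n; rewrite seriesE big1 // => m _; rewrite zero ?orbT.
Qed.

Lemma wshift_adj_not_pure : ~ is_pure l2_ip (wshift_adj (N := N.+1) a).
Proof.
pose x := Ell2 past_basisF0_l2.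
have iterE k : ell2_val (iter k (wshift_adj a) x) = past_basisF k.
  elim: k => [//|k IH]; rewrite iterS /= IH.
  apply/funext => s; apply/funext => m; apply/funext => j.
  by case: s; case: m => [|m] //=; rewrite /past_basisF /= mulr0.
have ge1 k : 1 <= ipnorm l2_ip (iter k (wshift_adj a) x).
  rewrite ipnorm_l2 -sqrtr1 ler_sqrt ?l2_sqnorm_ge0 ?ell2_valP //=.
  have := sqnorm_coord_le false k ord0 (ell2_valP (iter k (wshift_adj a) x)).
  by rewrite !iterE /past_basisF /= !eqxx sqnorm_real expr1n.
move=> /(_ x) hc.
have : 1 <= lim ((fun k => ipnorm l2_ip (iter k (wshift_adj a) x)) @ \oo).
  by apply: limr_ge; [apply/cvg_ex; eexists; exact: hc | exact: nearW].
by rewrite (cvg_lim _ hc) // ler10.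
Qed.

End NotPure.

Lemma wshift_curvature (R : realType) (N : nat) (a : R) : 0 <= a -> a < 1 ->
  exists (V : lmodType R[i]) (ip : V -> V -> R[i]) (T Ts D : V -> V)
         (n : nat) (e : 'I_n -> V),
    is_hilbert ip /\ is_contraction_op ip T /\ is_adjoint ip T Ts /\
    is_defect_op ip T Ts D /\ finite_rank D /\ is_onb_range ip D e /\
    ~ is_pure ip Ts /\ curvature ip T Ts D e = (N.+1%:R * (1 - a ^+ 2))%:E.
Proof.
move=> a0 a1; pose d := Num.sqrt (1 - a ^+ 2).
have a_le1 : a ^+ 2 <= 1 by rewrite expr_le1 // ltW.
have a_lt1 : a ^+ 2 < 1 by rewrite expr_lt1.
have defect_sqr : d ^+ 2 = 1 - a ^+ 2 by rewrite sqr_sqrtr // subr_ge0.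
have d_le1 : d ^+ 2 <= 1 by rewrite defect_sqr lerBlDr lerDl sqr_ge0.
have d_neq0 : d != 0 by rewrite sqrtr_eq0 subr_le0 -ltNge.
exists (ell2 R N.+1), l2_ip, (wshift a), (wshift_adj a), (defect d), N.+1, (@origin_basis R N.+1).
split; first exact: l2_hilbert.
split; first exact: wshift_contraction.
split; first exact: wshift_adjoint.
split; first exact: (defect_defect_op N.+1 (sqrtr_ge0 _) d_le1 defect_sqr).
split; first exact: defect_finite_rank.
split; first exact: defect_onb_range _ d_neq0.
split; first exact: wshift_adj_not_pure.
by apply: curvature_const => t r r0 r1; rewrite curv_integrand_wshift.
Qed.

Lemma bilateral_shift_curvature0 (R : realType) :
  exists (V : lmodType R[i]) (ip : V -> V -> R[i]) (T Ts D : V -> V)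
         (n : nat) (e : 'I_n -> V),
    is_hilbert ip /\ is_contraction_op ip T /\ is_adjoint ip T Ts /\
    is_defect_op ip T Ts D /\ finite_rank D /\ is_onb_range ip D e /\
    curvature ip T Ts D e = 0%:E.
Proof.
have one_le1 : (1 : R) ^+ 2 <= 1 by rewrite expr1n.
have defect0 (x : ell2 R 1) : defect 0 x = 0.
  apply: val_inj; apply/funext => s; apply/funext => m; apply/funext => j.
  by case: s; case: m => //=; rewrite mul0r.
exists (ell2 R 1), l2_ip, (wshift 1), (wshift_adj 1), (defect 0), 0%N, (fun=> 0).
split; first exact: l2_hilbert.
split; first exact: wshift_contraction.
split; first exact: wshift_adjoint.
split; first by apply: defect_defect_op; rewrite ?expr0n ?expr1n ?subrr.
split; first exact: defect_finite_rank.
split; first by split=> [[]|[]|x]; last by exists (fun=> 0); rewrite big_ord0 defect0.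
by apply: curvature_const => t r _ _; rewrite /curv_integrand /trace_on big_ord0 /= mulr0.
Qed.

Lemma gt0_natS_one_sub_sqr (R : realType) (kappa : R) : 0 < kappa ->
  exists (N : nat) (a : R), [/\ 0 <= a, a < 1 & kappa = N.+1%:R * (1 - a ^+ 2)].
Proof.
move=> k0; pose N := Num.truncn kappa; exists N, (Num.sqrt (1 - kappa / N.+1%:R)).
have NS0 : (0 : R) < N.+1%:R by rewrite ltr0n.
have b0 : 0 <= 1 - kappa / N.+1%:R by rewrite subr_ge0 ler_pdivrMr // mul1r ltW // truncnS_gt.
split; first exact: sqrtr_ge0.
- by rewrite -[X in _ < X]sqrtr1 ltr_sqrt // ltrBlDr ltrDl divr_gt0.
- by rewrite sqr_sqrtr //; field; rewrite gt_eqF.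
Qed.

Lemma half_not_int (R : realType) : ~ (exists k : int, (1 / 2 : R) = k%:~R).
Proof.
move=> [k hk].
have h0 : (0 : R) < k%:~R by rewrite -hk divr_gt0.
have h1 : (k%:~R : R) < 1 by rewrite -hk ltr_pdivrMr // mul1r; lra.
rewrite -[0]/((0 : int)%:~R) ltr_int in h0.
rewrite -[1]/((1 : int)%:~R) ltr_int in h1.
by case: k h0 h1 {hk} => [[|n]|n].
Qed.

Theorem mainTheorem10 (R : realType) :
  (forall kappa : R, 0 <= kappa ->
    exists (V : lmodType R[i]) (ip : V -> V -> R[i]) (T Ts D : V -> V)
           (n : nat) (e : 'I_n -> V),
      is_hilbert ip /\ is_contraction_op ip T /\ is_adjoint ip T Ts /\
      is_defect_op ip T Ts D /\ finite_rank D /\ is_onb_range ip D e /\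
      curvature ip T Ts D e = kappa%:E)
  /\
  (exists (V : lmodType R[i]) (ip : V -> V -> R[i]) (T Ts D : V -> V)
          (n : nat) (e : 'I_n -> V) (kappa : R),
      is_hilbert ip /\ is_contraction_op ip T /\ is_adjoint ip T Ts /\
      is_defect_op ip T Ts D /\ finite_rank D /\ is_onb_range ip D e /\
      ~ is_pure ip Ts /\
      curvature ip T Ts D e = kappa%:E /\
      ~ (exists k : int, kappa = k%:~R)).
Proof.
split.
  move=> kappa; rewrite le_eqVlt => /predU1P[<-|kappa_gt0].
    exact: bilateral_shift_curvature0.
  have [N [a [a0 a1 ->]]] := gt0_natS_one_sub_sqr kappa_gt0.
  have [V [ip [T [Ts [D [n [e [? [? [? [? [? [? [_ ?]]]]]]]]]]]]]] := wshift_curvature N a0 a1.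
  by exists V, ip, T, Ts, D, n, e.
have [|N [a [a0 a1 half]]] := @gt0_natS_one_sub_sqr R (1 / 2); first by rewrite divr_gt0.
have [V [ip [T [Ts [D [n [e hT]]]]]]] := wshift_curvature N a0 a1.
exists V, ip, T, Ts, D, n, e, (1 / 2).
by have := @half_not_int R; rewrite -half in hT; tauto.
Qed.
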